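(* Let $S,T,W$ be as in the trilevel setting with contraction constant $r\in[0,1)$ of $S$, and set $\alpha_k=\min\{\frac{2}{(1-r)k},1\}$ for $k\ge1$ and $J=\lfloor\frac{2}{1-r}\rfloor$. Given $x^0\in\mathbb R^n$, define for $k\ge1$: $v^k=S(x^{k-1})$, $y^k=T(x^{k-1})$, $z^k=W(x^{k-1})$, and $x^k=\alpha_kv^k+(1-\alpha_k)\alpha_ky^k+(1-\alpha_k)^2z^k$. Let $x\in\mathrm{Fix}(W)$ and let $C_x,C_S,C_T\ge0$ be constants such that for all $k\ge0$: $\|x^k-x\|\le C_x$, $\|S(x^k)-x\|\le C_S+C_x$, $\|T(x^k)-x\|\le C_T+C_x$ (such constants exist). Then for every $k\ge1$, \[\|x^k-x^{k-1}\|\le\frac{(C_S+2C_T+5C_x)J}{(1-r)k},\qquad \|z^k-x^{k-1}\|\le\frac{(C_S+2C_T+5C_x)(J+2)}{(1-r)k}.\]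
   Context: Trilevel setting. Let $f_1,f_2:\mathbb R^n\to\mathbb R$ be convex and continuously differentiable with $L_{f_i}$-Lipschitz gradients, $g_1,g_2:\mathbb R^n\to(-\infty,+\infty]$ proper, lower semicontinuous and convex, $\phi_i=f_i+g_i$; $\omega:\mathbb R^n\to\mathbb R$ is $\mu$-strongly convex, continuously differentiable with $L_\omega$-Lipschitz gradient. $\mathrm{prox}_g(x)=\arg\min_u\{g(u)+\tfrac12\|u-x\|^2\}$. For $u\in(0,\tfrac{2}{L_\omega+\mu}]$, $t\in(0,1/L_{f_1}]$, $s\in(0,1/L_{f_2}]$: $S(x)=x-u\nabla\omega(x)$, $T(x)=\mathrm{prox}_{tg_1}(x-t\nabla f_1(x))$, $W(x)=\mathrm{prox}_{sg_2}(x-s\nabla f_2(x))$. $S$ is a contraction with constant $r=\sqrt{1-\tfrac{2u\mu L_\omega}{\mu+L_\omega}}$, assumed here to lie in $[0,1)$; $T,W$ are nonexpansive, and $\mathrm{Fix}(W)=\arg\min\phi_2\neq\emptyset$. *)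

From HB Require Import structures.
From mathcomp Require Import all_boot all_order all_algebra.
From mathcomp Require Import all_classical all_reals all_analysis.
Set Implicit Arguments. Unset Strict Implicit. Unset Printing Implicit Defensive.
Import Order.TTheory GRing.Theory Num.Theory.
Import numFieldNormedType.Exports.
Local Open Scope ring_scope.

Section Defs.
Variables (R : realType) (n : nat).
Local Notation V := 'rV[R]_n.

Definition inner (x y : V) : R := \sum_(i < n) x ord0 i * y ord0 i.
Definition enorm (x : V) : R := Num.sqrt (inner x x).

Definition convex_fun (f : V -> R) : Prop :=
  forall (x y : V) (l : R), 0 < l < 1 ->
    f (l *: x + (1 - l) *: y) <= l * f x + (1 - l) * f y.

Definition strongly_convex (mu : R) (f : V -> R) : Prop :=
  forall (x y : V) (l : R), 0 < l < 1 ->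
    f (l *: x + (1 - l) *: y)
      <= l * f x + (1 - l) * f y - mu / 2 * l * (1 - l) * enorm (x - y) ^+ 2.

Definition is_gradient (f : V -> R) (gf : V -> V) : Prop :=
  forall x, differentiable f x /\ forall h, 'd f x h = inner (gf x) h.

Definition lipschitz_with (L : R) (F : V -> V) : Prop :=
  forall x y, enorm (F x - F y) <= L * enorm (x - y).

Definition proper_fun (g : V -> \bar R) : Prop :=
  (forall x, g x != -oo%E) /\ (exists x, g x != +oo%E).

Definition lsc_fun (g : V -> \bar R) : Prop :=
  forall (x : V) (a : R), (a%:E < g x)%E -> \forall y \near x, (a%:E < g y)%E.

Definition econvex_fun (g : V -> \bar R) : Prop :=
  forall (x y : V) (l : R), 0 < l < 1 ->
    (g (l *: x + (1 - l) *: y)%R <= l%:E * g x + (1 - l)%R%:E * g y)%E.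

Definition is_prox (c : R) (g : V -> \bar R) (w p : V) : Prop :=
  forall u, (c%:E * g p + (enorm (p - w) ^+ 2 / 2)%:E
             <= c%:E * g u + (enorm (u - w) ^+ 2 / 2)%:E)%E.

Definition nonexpansive (F : V -> V) : Prop :=
  forall x y, enorm (F x - F y) <= enorm (x - y).

Definition contraction_with (r : R) (F : V -> V) : Prop :=
  forall x y, enorm (F x - F y) <= r * enorm (x - y).

End Defs.

Definition alpha_step (R : realType) (r : R) (k : nat) : R :=
  Num.min (2 / ((1 - r) * k%:R)) 1.

From HB Require Import structures.
From mathcomp Require Import all_boot all_order all_algebra.
From mathcomp Require Import all_classical all_reals all_analysis.
From mathcomp Require Import ring lra.
Set Implicit Arguments. Unset Strict Implicit. Unset Printing Implicit Defensive.
Import Order.TTheory GRing.Theory Num.Theory.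
Import numFieldNormedType.Exports.
Local Open Scope ring_scope.

(* Write D_k = |x^{k+1} - x^k| and C = CS + CT + 4 Cx.  Expanding the difference
   of two consecutive updates and using that S is an r-contraction and T, W are
   nonexpansive, while the change of weights is controlled by the change
   alpha_{k+1} - alpha_{k+2} of step sizes (the weights are Lipschitz in the
   step), one gets the recursion
       D_{k+1} <= (1 - alpha_{k+2}(1-r)) D_k + (alpha_{k+1} - alpha_{k+2}) C.
   For k <= J = floor(2/(1-r)) the crude bound D_k <= 2 Cx already gives
   D_k <= M J / ((1-r)(k+1)); beyond J, alpha_k = 2/((1-r)k) and an elementary
   computation (rate_step) propagates this bound along the recursion.  The
   residual |W(x^k) - x^k| differs from D_k by at most alpha_{k+1} C, which gives
   the second bound. *)

Section Euclidean.
Variables (R : realType) (n : nat).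
Local Notation V := 'rV[R]_n.
Implicit Types (x y z u v : V) (a b c : R).

Lemma innerDl x y z : inner (x + y) z = inner x z + inner y z.
Proof. rewrite /inner -big_split; apply: eq_bigr => i _; by rewrite !mxE mulrDl. Qed.

Lemma innerZl a x y : inner (a *: x) y = a * inner x y.
Proof. rewrite /inner mulr_sumr; apply: eq_bigr => i _; rewrite !mxE; ring. Qed.

Lemma innerC x y : inner x y = inner y x.
Proof. rewrite /inner; apply: eq_bigr => i _; ring. Qed.

Lemma innerDr x y z : inner z (x + y) = inner z x + inner z y.
Proof. by rewrite innerC innerDl !(innerC z). Qed.

Lemma innerZr a x y : inner y (a *: x) = a * inner y x.
Proof. by rewrite innerC innerZl innerC. Qed.

Lemma inner_ge0 x : 0 <= inner x x.
Proof. by rewrite /inner; apply: sumr_ge0 => i _; rewrite -expr2 sqr_ge0. Qed.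

Lemma inner_null x y : inner y y = 0 -> inner x y = 0.
Proof.
move=> y0; have y_eq0 i : y ord0 i = 0.
  have sq_ge0 j : true -> 0 <= y ord0 j * y ord0 j by rewrite -expr2 sqr_ge0.
  have /eqP := @psumr_eq0P R _ xpredT (fun j => y ord0 j * y ord0 j) sq_ge0 y0 i isT.
  by rewrite mulf_eq0 orbb => /eqP.
by rewrite /inner big1 // => i _; rewrite y_eq0 mulr0.
Qed.

(* Cauchy-Schwarz, from the nonnegativity of |y|^2 x - <x,y> y squared. *)
Lemma cauchy_schwarz x y : inner x y ^+ 2 <= inner x x * inner y y.
Proof.
have [y0|y_neq0] := eqVneq (inner y y) 0.
  by rewrite (inner_null x y0) y0 expr0n /= mulr0.
have y_gt0 : 0 < inner y y by rewrite lt_def y_neq0 inner_ge0.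
set a := inner x y; set b := inner y y.
have := inner_ge0 (b *: x + (- a) *: y).
rewrite innerDl !innerDr !innerZl !innerZr (innerC y x) -/a -/b.
have -> : b * (b * inner x x) + b * (- a * a) + (- a * (b * a) + - a * (- a * b))
   = b * (b * inner x x - a ^+ 2) by ring.
by rewrite pmulr_rge0 // subr_ge0 mulrC.
Qed.

Lemma enorm_ge0 x : 0 <= enorm x.
Proof. exact: sqrtr_ge0. Qed.

Lemma enormZ a x : enorm (a *: x) = `|a| * enorm x.
Proof.
by rewrite /enorm innerZl innerZr mulrA -expr2 sqrtrM ?sqr_ge0 // sqrtr_sqr.
Qed.

Lemma enormN x : enorm (- x) = enorm x.
Proof. by rewrite -scaleN1r enormZ normrN normr1 mul1r. Qed.

Lemma enormD x y : enorm (x + y) <= enorm x + enorm y.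
Proof.
rewrite -(@ler_pXn2r _ 2) ?nnegrE ?addr_ge0 ?enorm_ge0 //.
rewrite /enorm sqr_sqrtr ?inner_ge0 // sqrrD !sqr_sqrtr ?inner_ge0 //.
rewrite innerDl !innerDr (innerC y x).
suff : inner x y <= Num.sqrt (inner x x) * Num.sqrt (inner y y) by lra.
rewrite -sqrtrM ?inner_ge0 //; apply: le_trans (ler_norm _) _.
by rewrite -sqrtr_sqr ler_sqrt ?mulr_ge0 ?inner_ge0 // cauchy_schwarz.
Qed.

Lemma enormD_le x y b c : enorm x <= b -> enorm y <= c -> enorm (x + y) <= b + c.
Proof. by move=> xb yc; apply: le_trans (enormD x y) (lerD xb yc). Qed.

Lemma enormB_le x y b c : enorm x <= b -> enorm y <= c -> enorm (x - y) <= b + c.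
Proof. by move=> xb yc; apply: enormD_le; rewrite ?enormN. Qed.

Lemma enormZ_le a x b : enorm x <= b -> enorm (a *: x) <= `|a| * b.
Proof. by move=> xb; rewrite enormZ ler_wpM2l. Qed.

End Euclidean.

(* J = floor(2/(1-r)) is the last index k >= 1 with alpha_k = 1. *)
Definition last_unit_step (R : realType) (r : R) : R :=
  (Num.floor (2 / (1 - r)))%:~R.

Lemma rate_step (R : realType) (M J Q K D al al' : R) :
  0 <= M -> 2 <= J -> 0 < Q -> 2 < K ->
  al' = 2 / (Q * K) -> al' <= al -> al <= 2 / (Q * (K - 1)) ->
  D <= M * J / (Q * (K - 1)) ->
  (1 - al' * Q) * D + (al - al') * M <= M * J / (Q * K).
Proof.
move=> M_ge0 J_ge2 Q_gt0 K_gt2 -> al'_le al_le D_le.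
have K_gt0 : 0 < K by lra.
have K_neq0 : K != 0 by rewrite gt_eqF.
have K1_neq0 : K - 1 != 0 by rewrite gt_eqF //; lra.
have Q_neq0 : Q != 0 by rewrite gt_eqF.
have contr_eq : 1 - 2 / (Q * K) * Q = 1 - 2 / K.
  by field; rewrite K_neq0 Q_neq0.
have contr_ge0 : 0 <= 1 - 2 / K.
  by rewrite subr_ge0 ler_pdivrMr // mul1r; lra.
apply: le_trans (_ : (1 - 2 / K) * (M * J / (Q * (K - 1)))
                     + (2 / (Q * (K - 1)) - 2 / (Q * K)) * M <= _).
  rewrite contr_eq; apply: lerD; first exact: ler_wpM2l.
  by apply: ler_wpM2r => //; apply: lerB.
have -> : (1 - 2 / K) * (M * J / (Q * (K - 1)))
          + (2 / (Q * (K - 1)) - 2 / (Q * K)) * M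
        = M * J / (Q * K) - M * (J - 2) / (Q * K * (K - 1)).
  by field; rewrite K_neq0 K1_neq0 Q_neq0.
rewrite gerBl divr_ge0 ?mulr_ge0 ?subr_ge0 //; lra.
Qed.

Section StepSize.
Variables (R : realType) (r : R).
Hypothesis r01 : 0 <= r < 1.
Local Notation a := (alpha_step r).
Local Notation J := (last_unit_step r).

Let gap_gt0 : 0 < 1 - r. Proof. by case/andP: r01 => _ r1; lra. Qed.

Lemma alpha_ge0 k : 0 <= a k.
Proof.
rewrite /alpha_step le_min ler01 andbT divr_ge0 // mulr_ge0 //.
exact: ltW.
Qed.

Lemma alpha_le1 k : a k <= 1.
Proof. by rewrite /alpha_step ge_min lexx orbT. Qed.

Lemma alpha_le_ratio k : a k <= 2 / ((1 - r) * k%:R).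
Proof. by rewrite /alpha_step ge_min lexx. Qed.

Lemma alpha_ratio k : 2 <= (1 - r) * k%:R -> a k = 2 / ((1 - r) * k%:R).
Proof.
move=> k_large; have k_gt0 : 0 < (1 - r) * k%:R by apply: lt_le_trans k_large.
by rewrite /alpha_step min_l // ler_pdivrMr // mul1r.
Qed.

(* The step sizes are nonincreasing (from k = 1 on; alpha_0 = 0). *)
Lemma alpha_nonincr k : a k.+2 <= a k.+1.
Proof.
rewrite /alpha_step le_min !ge_min lexx !orbT andbT; apply/orP; left.
rewrite ler_pdivrMr ?mulr_gt0 // mulrAC ler_pdivlMr ?mulr_gt0 //.
by rewrite ler_pM2l // ler_pM2l // ler_nat.
Qed.

Lemma two_le_last_unit_step : 2 <= J.
Proof.
rewrite /last_unit_step -[2 : R]/((2%:Z)%:~R) ler_int floor_ge_int.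
by rewrite ler_pdivlMr //; case/andP: r01 => r0 _; lra.
Qed.

Lemma nat_le_last_unit_step k : (1 - r) * k%:R <= 2 -> k%:R <= J.
Proof.
move=> k_small; rewrite /last_unit_step -[k%:R]/((k%:Z)%:~R : R) ler_int.
by rewrite floor_ge_int ler_pdivlMr // mulrC.
Qed.

(* Below J the crude bound D_m <= M already gives the rate; above J the
   recursion D_{m+1} <= (1 - alpha_{m+2}(1-r)) D_m + (alpha_{m+1} - alpha_{m+2}) M
   propagates it (rate_step). *)
Lemma iterate_rate (M : R) (D : nat -> R) : 0 <= M ->
  (forall m, D m <= M) ->
  (forall m, D m.+1 <= (1 - a m.+2 * (1 - r)) * D m + (a m.+1 - a m.+2) * M) ->
  forall m, D m <= M * J / ((1 - r) * m.+1%:R).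
Proof.
move=> M_ge0 D_le D_rec.
have [r0 r1] := andP r01.
have small_case m : (1 - r) * m.+1%:R <= 2 -> D m <= M * J / ((1 - r) * m.+1%:R).
  move=> m_small; have q_gt0 : 0 < (1 - r) * m.+1%:R by rewrite mulr_gt0.
  apply: le_trans (D_le m) _; rewrite ler_pdivlMr // ler_wpM2l //.
  apply: le_trans _ (nat_le_last_unit_step m_small).
  by rewrite ler_piMl //; lra.
elim=> [|m IH]; first by apply: small_case; rewrite mulr1; lra.
have [m_small|m_large] := lerP ((1 - r) * m.+2%:R) 2; first exact: small_case.
have pred_K : m.+2%:R - 1 = m.+1%:R :> R by rewrite -natr1 addrK.
apply: le_trans (D_rec m) _; apply: rate_step; rewrite ?pred_K //.
- exact: two_le_last_unit_step.
- by apply: lt_le_trans m_large _; rewrite ler_piMl //; lra.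
- exact/alpha_ratio/ltW.
- exact: alpha_nonincr.
- exact: alpha_le_ratio.
Qed.

End StepSize.

Section Coefficients.
Variable R : realType.
Implicit Types a b : R.

Lemma quad_coef_lipschitz a b : 0 <= a <= 1 -> 0 <= b <= 1 ->
  `|(1 - a) * a - (1 - b) * b| <= `|a - b|.
Proof.
move=> /andP[a0 a1] /andP[b0 b1].
have -> : (1 - a) * a - (1 - b) * b = (a - b) * (1 - a - b) by ring.
rewrite normrM ler_piMr // ler_norml; apply/andP; split; lra.
Qed.

Lemma sq_coef_lipschitz a b : 0 <= a <= 1 -> 0 <= b <= 1 ->
  `|(1 - a) ^+ 2 - (1 - b) ^+ 2| <= 2 * `|a - b|.
Proof.
move=> /andP[a0 a1] /andP[b0 b1].
have -> : (1 - a) ^+ 2 - (1 - b) ^+ 2 = (a - b) * (a + b - 2) by ring.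
rewrite normrM mulrC ler_wpM2r // ler_norml; apply/andP; split; lra.
Qed.

End Coefficients.

Section Combinations.
Variables (R : realType) (n : nat).
Local Notation V := 'rV[R]_n.

Definition tri_comb (a : R) (s t w : V) : V :=
  a *: s + ((1 - a) * a) *: t + ((1 - a) ^+ 2) *: w.

Lemma tri_comb_diff (a a' : R) (s t w s' t' w' x : V) :
  tri_comb a' s' t' w' - tri_comb a s t w
  = a' *: (s' - s) + ((1 - a') * a') *: (t' - t) + ((1 - a') ^+ 2) *: (w' - w)
    + (a' - a) *: (s - x) + ((1 - a') * a' - (1 - a) * a) *: (t - x)
    + ((1 - a') ^+ 2 - (1 - a) ^+ 2) *: (w - x).
Proof. by apply/rowP => i; rewrite !mxE; ring. Qed.

(* The weights sum to 1, so the update differs from w by a combination of the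
   deviations of s, t, w from any point x. *)
Lemma tri_comb_subr (a : R) (s t w x : V) :
  tri_comb a s t w - w
  = a *: (s - x) + ((1 - a) * a) *: (t - x) - (a + (1 - a) * a) *: (w - x).
Proof. by apply/rowP => i; rewrite !mxE; ring. Qed.

End Combinations.

Section Iteration.
Variables (R : realType) (n : nat) (r : R).
Variables (S T W : 'rV[R]_n -> 'rV[R]_n) (xs : nat -> 'rV[R]_n).
Variables (x : 'rV[R]_n) (Cx CS CT : R).
Hypothesis r01 : 0 <= r < 1.
Hypothesis S_contr : contraction_with r S.
Hypothesis T_ne : nonexpansive T.
Hypothesis W_ne : nonexpansive W.
Hypothesis x_fixed : W x = x.
Hypothesis xs_step : forall k,
  xs k.+1 = tri_comb (alpha_step r k.+1) (S (xs k)) (T (xs k)) (W (xs k)).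
Hypothesis xs_bound : forall k, enorm (xs k - x) <= Cx.
Hypothesis S_bound : forall k, enorm (S (xs k) - x) <= CS + Cx.
Hypothesis T_bound : forall k, enorm (T (xs k) - x) <= CT + Cx.
Local Notation a := (alpha_step r).
Local Notation J := (last_unit_step r).
Local Notation C := (CS + CT + 4 * Cx).

Lemma W_iterate_bound k : enorm (W (xs k) - x) <= Cx.
Proof. by apply: le_trans (xs_bound k); rewrite -{1}x_fixed; apply: W_ne. Qed.

Lemma bound_consts_ge0 : [/\ 0 <= Cx, 0 <= CS + Cx & 0 <= CT + Cx].
Proof.
by split; apply: le_trans (enorm_ge0 _) _; [apply: (xs_bound 0)
  | apply: (S_bound 0) | apply: (T_bound 0)].
Qed.

Lemma iterate_gap_le k : enorm (xs k.+1 - xs k) <= 2 * Cx.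
Proof.
have -> : xs k.+1 - xs k = (xs k.+1 - x) - (xs k - x) by rewrite opprB addrA subrK.
by apply: le_trans (enormB_le (xs_bound k.+1) (xs_bound k)) _; lra.
Qed.

Lemma iterate_gap_recursion k :
  enorm (xs k.+2 - xs k.+1)
    <= (1 - a k.+2 * (1 - r)) * enorm (xs k.+1 - xs k) + (a k.+1 - a k.+2) * C.
Proof.
set a' := a k.+2; set a1 := a k.+1; set D := enorm (xs k.+1 - xs k).
have a'01 : 0 <= a' <= 1 by rewrite alpha_ge0 ?alpha_le1.
have a101 : 0 <= a1 <= 1 by rewrite alpha_ge0 ?alpha_le1.
have [a'0 a'1] := andP a'01.
have step_gap : `|a' - a1| = a1 - a'.
  by rewrite distrC ger0_norm // subr_ge0 alpha_nonincr.
have := tri_comb_diff a1 a' (S (xs k)) (T (xs k)) (W (xs k))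
  (S (xs k.+1)) (T (xs k.+1)) (W (xs k.+1)) x.
rewrite -!xs_step => ->.
set b' := (1 - a') * a'; set c' := (1 - a') ^+ 2.
have b'_ge0 : 0 <= b' by rewrite mulr_ge0 ?subr_ge0.
have c'_ge0 : 0 <= c' by rewrite sqr_ge0.
have T_gap : `|b' - (1 - a1) * a1| * (CT + Cx) <= (a1 - a') * (CT + Cx).
  by rewrite -step_gap ler_wpM2r ?quad_coef_lipschitz //; case: bound_consts_ge0.
have W_gap : `|c' - (1 - a1) ^+ 2| * Cx <= 2 * (a1 - a') * Cx.
  by rewrite -step_gap ler_wpM2r ?sq_coef_lipschitz //; case: bound_consts_ge0.
apply: le_trans (_ : _ <= `|a'| * (r * D) + `|b'| * D + `|c'| * D
    + `|a' - a1| * (CS + Cx) + `|b' - (1 - a1) * a1| * (CT + Cx)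
    + `|c' - (1 - a1) ^+ 2| * Cx) _.
  repeat apply: enormD_le; apply: enormZ_le.
  - exact: S_contr.
  - exact: T_ne.
  - exact: W_ne.
  - exact: S_bound.
  - exact: T_bound.
  - exact: W_iterate_bound.
rewrite step_gap (ger0_norm a'0) (ger0_norm b'_ge0) (ger0_norm c'_ge0).
have -> : (1 - a' * (1 - r)) * D + (a1 - a') * C
  = a' * (r * D) + b' * D + c' * D + (a1 - a') * (CS + Cx)
    + (a1 - a') * (CT + Cx) + 2 * (a1 - a') * Cx by rewrite /b' /c'; ring.
lra.
Qed.

(* The fixed-point residual |W(x^k) - x^k| is at most the step length plus
   alpha_{k+1} C, since x^{k+1} - W(x^k) is a combination with weights of
   total size at most 2 alpha_{k+1}. *)
Lemma iterate_residual k :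
  enorm (W (xs k) - xs k) <= enorm (xs k.+1 - xs k) + a k.+1 * C.
Proof.
have -> : W (xs k) - xs k = (xs k.+1 - xs k) - (xs k.+1 - W (xs k)).
  by rewrite opprB [RHS]addrC addrA subrK.
apply: enormB_le => //.
rewrite xs_step (tri_comb_subr _ _ _ _ x).
set a1 := a k.+1; set b1 := (1 - a1) * a1.
have a101 : 0 <= a1 <= 1 by rewrite alpha_ge0 ?alpha_le1.
have b1_ge0 : 0 <= b1 by case/andP: a101 => a10 a11; rewrite mulr_ge0 ?subr_ge0.
have b1_le : b1 <= a1 by case/andP: a101 => a10 a11; rewrite ler_piMl //; lra.
have a1_ge0 : 0 <= a1 by case/andP: a101.
apply: le_trans (_ : _ <= `|a1| * (CS + Cx) + `|b1| * (CT + Cx) + `|a1 + b1| * Cx) _.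
  apply: enormB_le; first apply: enormD_le; apply: enormZ_le.
  - exact: S_bound.
  - exact: T_bound.
  - exact: W_iterate_bound.
rewrite !ger0_norm ?addr_ge0 //.
have [Cx_ge0 _ CT_Cx] := bound_consts_ge0.
have -> : a1 * C = a1 * (CS + Cx) + a1 * (CT + Cx) + (a1 + a1) * Cx by ring.
have T_part : b1 * (CT + Cx) <= a1 * (CT + Cx) by rewrite ler_wpM2r.
have W_part : (a1 + b1) * Cx <= (a1 + a1) * Cx by rewrite ler_wpM2r ?lerD2l.
lra.
Qed.

Lemma iterate_gap_rate M : C <= M ->
  forall m, enorm (xs m.+1 - xs m) <= M * J / ((1 - r) * m.+1%:R).
Proof.
move=> C_le_M; have [Cx_ge0 CS_Cx CT_Cx] := bound_consts_ge0.
apply: (iterate_rate r01); first by lra.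
  by move=> m; apply: le_trans (iterate_gap_le m) _; lra.
move=> m; apply: le_trans (iterate_gap_recursion m) _.
by rewrite lerD2l ler_wpM2l // subr_ge0 alpha_nonincr.
Qed.

Lemma residual_rate M : C <= M ->
  forall m, enorm (W (xs m) - xs m) <= M * (J + 2) / ((1 - r) * m.+1%:R).
Proof.
move=> C_le_M m; have [Cx_ge0 CS_Cx CT_Cx] := bound_consts_ge0.
apply: le_trans (iterate_residual m) _.
have -> : M * (J + 2) / ((1 - r) * m.+1%:R)
  = M * J / ((1 - r) * m.+1%:R) + 2 / ((1 - r) * m.+1%:R) * M by ring.
apply: lerD; first exact: iterate_gap_rate.
apply: le_trans (_ : a m.+1 * M <= _); first by rewrite ler_wpM2l ?alpha_ge0.
by rewrite ler_wpM2r ?alpha_le_ratio //; lra.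
Qed.

End Iteration.

(* The theorem: the hypotheses on f_i, g_i, omega only serve to produce the
   contraction S and the nonexpansive maps T, W; the rates follow from the
   Iteration section with M = CS + 2 CT + 5 Cx >= CS + CT + 4 Cx. *)
Theorem mainTheorem15 (R : realType) (n : nat)
  (f1 f2 : 'rV[R]_n -> R) (gf1 gf2 : 'rV[R]_n -> 'rV[R]_n) (Lf1 Lf2 : R)
  (g1 g2 : 'rV[R]_n -> \bar R)
  (om : 'rV[R]_n -> R) (gom : 'rV[R]_n -> 'rV[R]_n) (mu Lom : R)
  (u t s : R) (S T W : 'rV[R]_n -> 'rV[R]_n) (r : R)
  (* the trilevel setting *)
  (hf1c : convex_fun f1) (hf2c : convex_fun f2)
  (hf1g : is_gradient f1 gf1) (hf2g : is_gradient f2 gf2)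
  (hLf1 : 0 < Lf1) (hLf2 : 0 < Lf2)
  (hf1L : lipschitz_with Lf1 gf1) (hf2L : lipschitz_with Lf2 gf2)
  (hg1p : proper_fun g1) (hg1l : lsc_fun g1) (hg1c : econvex_fun g1)
  (hg2p : proper_fun g2) (hg2l : lsc_fun g2) (hg2c : econvex_fun g2)
  (hmu : 0 < mu) (homc : strongly_convex mu om) (homg : is_gradient om gom)
  (hLom : 0 < Lom) (homL : lipschitz_with Lom gom)
  (hu : 0 < u <= 2 / (Lom + mu)) (ht : 0 < t <= 1 / Lf1) (hs : 0 < s <= 1 / Lf2)
  (hS : forall x, S x = x - u *: gom x)
  (hT : forall x, is_prox t g1 (x - t *: gf1 x) (T x))
  (hW : forall x, is_prox s g2 (x - s *: gf2 x) (W x))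
  (hr : r = Num.sqrt (1 - 2 * u * mu * Lom / (mu + Lom)))
  (hr01 : 0 <= r < 1)
  (* facts of the setting, as recalled in the paper *)
  (hScontr : contraction_with r S) (hTne : nonexpansive T) (hWne : nonexpansive W)
  (* the iteration *)
  (xs : nat -> 'rV[R]_n)
  (hxs : forall k : nat,
     xs k.+1 = alpha_step r k.+1 *: S (xs k)
               + ((1 - alpha_step r k.+1) * alpha_step r k.+1) *: T (xs k)
               + ((1 - alpha_step r k.+1) ^+ 2) *: W (xs k))
  (* a fixed point of W and the bounding constants *)
  (x : 'rV[R]_n) (hx : W x = x) (Cx CS CT : R)
  (hCx0 : 0 <= Cx) (hCS0 : 0 <= CS) (hCT0 : 0 <= CT)
  (hCx : forall k, enorm (xs k - x) <= Cx)
  (hCS : forall k, enorm (S (xs k) - x) <= CS + Cx)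
  (hCT : forall k, enorm (T (xs k) - x) <= CT + Cx) :
  let J : R := (Num.floor (2 / (1 - r)))%:~R in
  forall k : nat, (1 <= k)%N ->
    enorm (xs k - xs k.-1) <= (CS + 2 * CT + 5 * Cx) * J / ((1 - r) * k%:R) /\
    enorm (W (xs k.-1) - xs k.-1)
      <= (CS + 2 * CT + 5 * Cx) * (J + 2) / ((1 - r) * k%:R).
Proof.
move=> J [//|m] _ /=.
have C_le_M : CS + CT + 4 * Cx <= CS + 2 * CT + 5 * Cx by lra.
split.
- exact: (iterate_gap_rate hr01 hScontr hTne hWne hx hxs hCx hCS hCT C_le_M).
- exact: (residual_rate hr01 hScontr hTne hWne hx hxs hCx hCS hCT C_le_M).
Qed.
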